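(* Let $A/B$ and $A'/B'$ be ring extensions, and suppose there are Morita modules ${}_AM_{A'}$ and ${}_BN_{B'}$ with ${}_AA\otimes_BN_{B'}\cong {}_AM_{B'}$. Let $N^{*}=\mathrm{Hom}^r({}_BN,{}_BB)$ and identify $A'$ and $B'$ with the rings $N^{*}\otimes_BA\otimes_BN$ and $N^{*}\otimes_BB\otimes_BN$ as described in the context. Let $S$ be an $A$-$A$-bimodule and $S'=N^{*}\otimes_BS\otimes_BN$, an $A'$-$A'$-bimodule via $(\rho\otimes x\otimes u)(\sigma\otimes s\otimes v)=\rho\otimes x\,u^\sigma s\otimes v$ and $(\sigma\otimes s\otimes v)(\rho\otimes x\otimes u)=\sigma\otimes s\,v^\rho x\otimes u$. Then the map $D\mapsto 1\otimes D\otimes 1$ (i.e. $\rho\otimes x\otimes u\mapsto \rho\otimes D(x)\otimes u$) is an additive group isomorphism $\mathrm{Der}_B(A,S)\cong\mathrm{Der}_{B'}(A',S')$.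
   Context: All rings have identity, subrings contain the identity, and modules are unital. A ring extension $A/B$ means $B$ is a subring of $A$. For modules ${}_AM$, ${}_AN$, $\mathrm{Hom}^r({}_AM,{}_AN)$ denotes left $A$-homomorphisms written on the right of their arguments (the image of $u$ under $\rho$ is written $u^\rho$), and $\mathrm{End}^r({}_AM)=\mathrm{Hom}^r({}_AM,{}_AM)$. For bimodules ${}_AX_{A'}$, ${}_AY_{A'}$, write $X\mid Y$ if $X$ is isomorphic to a direct summand of a finite direct sum of copies of $Y$, and $X\sim Y$ if $X\mid Y$ and $Y\mid X$. A bimodule ${}_AM_{A'}$ is a Morita module if ${}_AM\sim{}_AA$ and $\mathrm{End}^r({}_AM)=A'$. $N^{*}$ is a $B'$-$B$-bimodule via $u^{(b'\rho b)}=(ub')^\rho b$. Since ${}_BN\sim{}_BB$ there are finitely many $f_j\in N^{*}$, $m_j\in N$ with $\sum_j n^{f_j}m_j=n$ for all $n\in N$. Identification: the map $N^{*}\otimes_BA\otimes_BN\to\mathrm{End}^r({}_AA\otimes_BN)\cong A'$, $\rho\otimes x\otimes u\mapsto[y\otimes v\mapsto y\,v^\rho x\otimes u]$, is a ring isomorphism when $N^{*}\otimes_BA\otimes_BN$ carries the multiplication $(\rho\otimes x\otimes u)(\sigma\otimes y\otimes v)=\rho\otimes x\,u^\sigma y\otimes v$ (identity $\sum_j f_j\otimes 1\otimes m_j$), and it carries $N^{*}\otimes_BB\otimes_BN$ onto $B'$. For an $A$-$A$-bimodule $S$, a $B$-derivation $D:A\to S$ is an additive map with $D(xy)=D(x)y+xD(y)$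 and $D(b)=0$ for all $b\in B$; $\mathrm{Der}_B(A,S)$ is the group of these. *)

From mathcomp Require Import all_boot all_algebra.
Set Implicit Arguments.
Unset Strict Implicit.
Unset Printing Implicit Defensive.
Import GRing.Theory.
Local Open Scope ring_scope.

Definition lin (R : pzRingType) (U V : lmodType R) (f : U -> V) : Prop :=
  forall (r : R) (x y : U), f (r *: x + y) = r *: f x + f y.

(* U | V : U is (isomorphic to) a direct summand of a finite direct sum V^n,
   as left R-modules. *)
Definition summand (R : pzRingType) (U V : lmodType R) : Prop :=
  exists (n : nat) (f : U -> {ffun 'I_n -> V}) (g : {ffun 'I_n -> V} -> U),
    [/\ lin f, lin g & forall x, g (f x) = x].

Definition mod_sim (R : pzRingType) (U V : lmodType R) : Prop :=
  summand U V /\ summand V U.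

(* rho : N -> B is an element of N^* = Hom^r(_B N, _B B) (u^rho = rho u). *)
Definition dualf (B : pzRingType) (N : lmodType B) (rho : N -> B) : Prop :=
  forall (b : B) (x y : N), rho (b *: x + y) = b * rho x + rho y.

Definition additive_fun (G H : zmodType) (g : G -> H) : Prop :=
  forall x y, g (x + y) = g x + g y.

Definition biadditive (G H K : zmodType) (m : G -> H -> K) : Prop :=
  (forall x1 x2 y, m (x1 + x2) y = m x1 y + m x2 y) /\
  (forall x y1 y2, m x (y1 + y2) = m x y1 + m x y2).

Definition bimod (R : pzRingType) (X : zmodType)
    (l : R -> X -> X) (r : X -> R -> X) : Prop :=
  [/\ forall a b x, l (a + b) x = l a x + l b x,
      forall a x y, l a (x + y) = l a x + l a y,
      forall x, l 1 x = x &
      forall a b x, l (a * b) x = l a (l b x)] /\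
  [/\ forall x a b, r x (a + b) = r x a + r x b,
      forall x y a, r (x + y) a = r x a + r y a,
      forall x, r x 1 = x &
      forall x a b, r x (a * b) = r (r x a) b] /\
  (forall a x b, l a (r x b) = r (l a x) b).

(* f : N^* x X x N -> G is additive in each variable and B-balanced, where
   N^* is a right B-module via u^(rho b) = u^rho b and X is a B-B-bimodule. *)
Definition balanced3 (B : pzRingType) (N : lmodType B) (X : zmodType)
    (lX : B -> X -> X) (rX : X -> B -> X) (G : zmodType)
    (f : (N -> B) -> X -> N -> G) : Prop :=
  [/\ forall rho1 rho2 x u, dualf rho1 -> dualf rho2 ->
        f (fun n => rho1 n + rho2 n) x u = f rho1 x u + f rho2 x u,
      forall rho x1 x2 u, dualf rho -> f rho (x1 + x2) u = f rho x1 u + f rho x2 u,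
      forall rho x u1 u2, dualf rho -> f rho x (u1 + u2) = f rho x u1 + f rho x u2,
      forall rho b x u, dualf rho -> f (fun n => rho n * b) x u = f rho (lX b x) u &
      forall rho x b u, dualf rho -> f rho (rX x b) u = f rho x (b *: u)].

(* (T, t) is the tensor product N^* (x)_B X (x)_B N, characterised by its
   universal property; t rho x u stands for rho (x) x (x) u. *)
Definition is_tensor3 (B : pzRingType) (N : lmodType B) (X : zmodType)
    (lX : B -> X -> X) (rX : X -> B -> X) (T : zmodType)
    (t : (N -> B) -> X -> N -> T) : Prop :=
  balanced3 lX rX t /\
  forall (G : zmodType) (f : (N -> B) -> X -> N -> G), balanced3 lX rX f ->
    exists g : T -> G,
      [/\ additive_fun g,
          forall rho x u, dualf rho -> g (t rho x u) = f rho x u &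
          forall g' : T -> G, additive_fun g' ->
            (forall rho x u, dualf rho -> g' (t rho x u) = f rho x u) ->
            forall z, g' z = g z].

Inductive sub_gen (G : zmodType) (P : G -> Prop) : G -> Prop :=
  | sub_gen_in x : P x -> sub_gen P x
  | sub_gen_0 : sub_gen P 0
  | sub_gen_sub x y : sub_gen P x -> sub_gen P y -> sub_gen P (x - y).

Definition is_derivation (R X : zmodType) (mul : R -> R -> R)
    (l : R -> X -> X) (r : X -> R -> X) (C : R -> Prop) (D : R -> X) : Prop :=
  [/\ additive_fun D,
      forall x y, D (mul x y) = r (D x) y + l x (D y) &
      forall c, C c -> D c = 0].

From mathcomp Require Import all_boot all_algebra.
From Stdlib Require Import ClassicalEpsilon.
Set Implicit Arguments.
Unset Strict Implicit.
Unset Printing Implicit Defensive.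
Import GRing.Theory.
Local Open Scope ring_scope.

(* A B-derivation D is B-balanced, so the universal property of the tensor
   product defines 1 (x) D (x) 1 on A' = N^* (x)_B A (x)_B N, and the Leibniz
   rule need only be checked on pure tensors.  For the converse, since B | N
   there are rho_j in N^* and u_j in N with sum_j u_j^rho_j = 1.  The
   contractions rho (x) s (x) v |-> u_j^rho s v^rho_k recover s from the
   elements rho_j (x) s (x) u_k of S', and a B'-derivation D' of A' comes
   from D x := sum_(j,k) contraction_jk (D' (rho_j (x) x (x) u_k)): the
   factorisation rho (x) x (x) v = sum_l (rho (x) 1 (x) u_l)(rho_l (x) x (x) v)
   moves D' past the factors lying in B'. *)

Section AdditiveFun.
Variables (G H : zmodType) (g : G -> H).
Hypothesis g_add : additive_fun g.

Lemma additive_fun0 : g 0 = 0.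
Proof. by apply: (addrI (g 0)); rewrite -g_add !addr0. Qed.

Lemma additive_funB x y : g (x - y) = g x - g y.
Proof. by rewrite -{2}(subrK y x) g_add addrK. Qed.

Lemma additive_fun_sum (I : Type) (r : seq I) (P : pred I) (F : I -> G) :
  g (\sum_(k <- r | P k) F k) = \sum_(k <- r | P k) g (F k).
Proof. by apply: big_morph; [exact: g_add | exact: additive_fun0]. Qed.

End AdditiveFun.

Lemma biadditive_l (G H K : zmodType) (m : G -> H -> K) :
  biadditive m -> forall y, additive_fun (m^~ y).
Proof. by case=> mD _ y x1 x2; apply: mD. Qed.

Lemma biadditive_r (G H K : zmodType) (m : G -> H -> K) :
  biadditive m -> forall x, additive_fun (m x).
Proof. by case=> _ mD x y1 y2; apply: mD. Qed.

Lemma dualf_additive (B : pzRingType) (N : lmodType B) (rho : N -> B) :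
  dualf rho -> additive_fun rho.
Proof. by move=> rho_dual x y; rewrite -{1}(scale1r x) rho_dual mul1r. Qed.

Lemma dualfZ (B : pzRingType) (N : lmodType B) (rho : N -> B) :
  dualf rho -> forall b x, rho (b *: x) = b * rho x.
Proof.
move=> rho_dual b x.
by rewrite -[b *: x]addr0 rho_dual (additive_fun0 (dualf_additive rho_dual)) addr0.
Qed.

Lemma trace_one_of_summand (B : pzRingType) (N : lmodType B) :
  summand (B^o) N -> exists n (rho : 'I_n -> N -> B) (u : 'I_n -> N),
    (forall j, dualf (rho j)) /\ \sum_j rho j (u j) = 1.
Proof.
case=> n [f [g [_ g_lin gfK]]].
have g_add : additive_fun g by move=> x y; have := g_lin 1 x y; rewrite !scale1r.
pose rho j (v : N) : B := g [ffun k => if k == j then v else 0].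
exists n, rho, (fun j => f 1 j); split.
- move=> j b x y; rewrite /rho.
  rewrite (_ : [ffun k => if k == j then b *: x + y else 0] =
     b *: [ffun k => if k == j then x else 0] + [ffun k => if k == j then y else 0]).
    exact: g_lin.
  by apply/ffunP => k; rewrite !ffunE; case: eqP; rewrite ?scaler0 ?addr0.
- rewrite -[RHS](gfK 1) -(additive_fun_sum g_add); congr g.
  apply/ffunP => k; rewrite sum_ffunE (bigD1 k) //= ffunE eqxx big1 ?addr0 //.
  by move=> j /negbTE; rewrite ffunE eq_sym => ->.
Qed.

Lemma is_derivationD (R : pzRingType) (X : zmodType) (l : R -> X -> X)
    (r : X -> R -> X) (C : R -> Prop) (D1 D2 : R -> X) :
  bimod l r -> is_derivation *%R l r C D1 -> is_derivation *%R l r C D2 ->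
  is_derivation *%R l r C (fun x => D1 x + D2 x).
Proof.
case=> [[_ lD _ _] [[_ rD _ _] _]] [D1_add D1M D1C] [D2_add D2M D2C]; split.
- by move=> x y; rewrite D1_add D2_add addrACA.
- by move=> x y; rewrite D1M D2M rD lD addrACA.
- by move=> c Cc; rewrite D1C // D2C // addr0.
Qed.

Section Tensor3.
Variables (B : pzRingType) (N : lmodType B) (X : zmodType).
Variables (lX : B -> X -> X) (rX : X -> B -> X).

Lemma balanced3_additive_mid (G : zmodType) (f : (N -> B) -> X -> N -> G) rho u :
  balanced3 lX rX f -> dualf rho -> additive_fun (f rho ^~ u).
Proof. by case=> _ fD _ _ _ rho_dual x y; apply: fD. Qed.

Lemma balanced3_comp (G K : zmodType) (f : (N -> B) -> X -> N -> G) (h : G -> K) :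
  balanced3 lX rX f -> additive_fun h ->
  balanced3 lX rX (fun rho x u => h (f rho x u)).
Proof.
case=> f1 f2 f3 f4 f5 h_add; split=> /=.
- by move=> *; rewrite f1 // h_add.
- by move=> *; rewrite f2 // h_add.
- by move=> *; rewrite f3 // h_add.
- by move=> *; rewrite f4.
- by move=> *; rewrite f5.
Qed.

Variables (T : zmodType) (t : (N -> B) -> X -> N -> T).
Hypothesis t_tensor : is_tensor3 lX rX t.

Lemma tensor3_ext (G : zmodType) (h1 h2 : T -> G) :
  additive_fun h1 -> additive_fun h2 ->
  (forall rho x u, dualf rho -> h1 (t rho x u) = h2 (t rho x u)) ->
  forall z, h1 z = h2 z.
Proof.
move=> h1_add h2_add h12 z; case: t_tensor => t_bal t_univ.
have [g [_ _ g_uniq]] := t_univ G _ (balanced3_comp t_bal h1_add).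
rewrite (g_uniq h1) // (g_uniq h2) // => rho x u rho_dual.
by rewrite h12.
Qed.

(* An arbitrary map unless f is balanced. *)
Definition tensor3_lift (G : zmodType) (f : (N -> B) -> X -> N -> G) : T -> G :=
  epsilon (inhabits (fun _ => 0)) (fun g => additive_fun g /\
    forall rho x u, dualf rho -> g (t rho x u) = f rho x u).

Section Lift.
Variables (G : zmodType) (f : (N -> B) -> X -> N -> G).
Hypothesis f_bal : balanced3 lX rX f.

Lemma tensor3_liftP : additive_fun (tensor3_lift f) /\
  forall rho x u, dualf rho -> tensor3_lift f (t rho x u) = f rho x u.
Proof.
case: t_tensor => _ t_univ; have [g [g_add gE _]] := t_univ G f f_bal.
by rewrite /tensor3_lift; apply epsilon_spec; exists g.
Qed.

Lemma tensor3_lift_additive : additive_fun (tensor3_lift f).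
Proof. by case: tensor3_liftP. Qed.

Lemma tensor3_liftE rho x u : dualf rho -> tensor3_lift f (t rho x u) = f rho x u.
Proof. by case: tensor3_liftP => _; apply. Qed.

End Lift.
End Tensor3.

Section DerivationTransfer.
Variables (A B : pzRingType) (i : {rmorphism B -> A}) (N : lmodType B).
Variables (S : zmodType) (sl : A -> S -> S) (sr : S -> A -> S).
Variables (TA TS : zmodType).
Variables (tA : (N -> B) -> A -> N -> TA) (tS : (N -> B) -> S -> N -> TS).
Variables (mulA : TA -> TA -> TA) (lS : TA -> TS -> TS) (rS : TS -> TA -> TS).

Hypothesis S_bimod : bimod sl sr.
Hypothesis tA_tensor : is_tensor3 (fun b x => i b * x) (fun x b => x * i b) tA.
Hypothesis tS_tensor :
  is_tensor3 (fun b s => sl (i b) s) (fun s b => sr s (i b)) tS.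
Hypothesis mulA_biadd : biadditive mulA.
Hypothesis mulAE : forall rho x u sigma y v, dualf rho -> dualf sigma ->
  mulA (tA rho x u) (tA sigma y v) = tA rho (x * i (sigma u) * y) v.
Hypothesis lS_biadd : biadditive lS.
Hypothesis lSE : forall rho x u sigma s v, dualf rho -> dualf sigma ->
  lS (tA rho x u) (tS sigma s v) = tS rho (sl (x * i (sigma u)) s) v.
Hypothesis rS_biadd : biadditive rS.
Hypothesis rSE : forall sigma s v rho x u, dualf sigma -> dualf rho ->
  rS (tS sigma s v) (tA rho x u) = tS sigma (sr s (i (rho v) * x)) u.

Local Notation DerB := (is_derivation *%R sl sr (fun x => exists b, x = i b)).
Local Notation B' :=
  (sub_gen (fun y => exists rho b u, dualf rho /\ y = tA rho (i b) u)).
Local Notation DerB' := (is_derivation mulA lS rS B').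

Lemma sl_additive_l s : additive_fun (sl^~ s).
Proof. by case: S_bimod => [[slD _ _ _] _] a b; apply: slD. Qed.

Lemma sl_additive_r a : additive_fun (sl a).
Proof. by case: S_bimod => [[_ slD _ _] _] s t; apply: slD. Qed.

Lemma sr_additive_l a : additive_fun (sr^~ a).
Proof. by case: S_bimod => [_ [[_ srD _ _] _]] s t; apply: srD. Qed.

Lemma sr_additive_r s : additive_fun (sr s).
Proof. by case: S_bimod => [_ [[srD _ _ _] _]] a b; apply: srD. Qed.

Lemma sl1 s : sl 1 s = s.
Proof. by case: S_bimod => [[_ _ ? _] _]. Qed.

Lemma slM a b s : sl (a * b) s = sl a (sl b s).
Proof. by case: S_bimod => [[_ _ _ ?] _]. Qed.

Lemma sr1 s : sr s 1 = s.
Proof. by case: S_bimod => [_ [[_ _ ? _] _]]. Qed.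

Lemma srM s a b : sr s (a * b) = sr (sr s a) b.
Proof. by case: S_bimod => [_ [[_ _ _ ?] _]]. Qed.

Lemma sl_sr a s b : sl a (sr s b) = sr (sl a s) b.
Proof. by case: S_bimod => [_ [_ ?]]. Qed.

Lemma tA_additive_mid rho u : dualf rho -> additive_fun (tA rho ^~ u).
Proof.
by case: tA_tensor => tA_bal _ rho_dual; exact: (balanced3_additive_mid u tA_bal rho_dual).
Qed.

Lemma tS_additive_mid rho u : dualf rho -> additive_fun (tS rho ^~ u).
Proof.
by case: tS_tensor => tS_bal _ rho_dual; exact: (balanced3_additive_mid u tS_bal rho_dual).
Qed.

Lemma tA_sum rho u (I : Type) (r : seq I) (P : pred I) (F : I -> A) :
  dualf rho -> tA rho (\sum_(k <- r | P k) F k) u = \sum_(k <- r | P k) tA rho (F k) u.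
Proof.
by move=> rho_dual; apply: additive_fun_sum (tA_additive_mid u rho_dual) _ _ _ _.
Qed.

Lemma tS_sum rho u (I : Type) (r : seq I) (P : pred I) (F : I -> S) :
  dualf rho -> tS rho (\sum_(k <- r | P k) F k) u = \sum_(k <- r | P k) tS rho (F k) u.
Proof.
by move=> rho_dual; apply: additive_fun_sum (tS_additive_mid u rho_dual) _ _ _ _.
Qed.

Definition der_tensor (D : A -> S) : TA -> TS :=
  tensor3_lift tA (fun rho x u => tS rho (D x) u).

Section BDerivation.
Variable D : A -> S.
Hypothesis D_der : DerB D.

Lemma der_i b : D (i b) = 0.
Proof. by case: D_der => _ _; apply; exists b. Qed.

Lemma der_tensor_balanced : balanced3 (fun b x => i b * x) (fun x b => x * i b)
  (fun rho x u => tS rho (D x) u).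
Proof.
case: D_der => D_add DM _; case: tS_tensor => [[tS1 tS2 tS3 tS4 tS5] _].
split=> /=.
- by move=> *; apply: tS1.
- by move=> rho x1 x2 u rho_dual; rewrite D_add tS2.
- by move=> *; apply: tS3.
- move=> rho b x u rho_dual.
  by rewrite DM der_i (additive_fun0 (sr_additive_l _)) add0r tS4.
- move=> rho x b u rho_dual.
  by rewrite DM der_i (additive_fun0 (sl_additive_r _)) addr0 tS5.
Qed.

Lemma der_tensor_additive : additive_fun (der_tensor D).
Proof. exact: (tensor3_lift_additive tA_tensor der_tensor_balanced). Qed.

Lemma der_tensorE rho x u : dualf rho -> der_tensor D (tA rho x u) = tS rho (D x) u.
Proof. exact: (tensor3_liftE tA_tensor der_tensor_balanced). Qed.

Lemma der_tensorM z w :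
  der_tensor D (mulA z w) = rS (der_tensor D z) w + lS z (der_tensor D w).
Proof.
case: D_der => _ DM _; move: z.
apply: (tensor3_ext tA_tensor (h1 := fun z => der_tensor D (mulA z w))
    (h2 := fun z => rS (der_tensor D z) w + lS z (der_tensor D w))).
- by move=> z1 z2; rewrite (biadditive_l mulA_biadd) der_tensor_additive.
- move=> z1 z2 /=; rewrite der_tensor_additive (biadditive_l rS_biadd).
  by rewrite (biadditive_l lS_biadd) addrACA.
move=> rho x u rho_dual /=; move: w.
apply: (tensor3_ext tA_tensor (h1 := fun w => der_tensor D (mulA (tA rho x u) w))
    (h2 := fun w => rS (der_tensor D (tA rho x u)) w + lS (tA rho x u) (der_tensor D w))).
- by move=> w1 w2; rewrite (biadditive_r mulA_biadd) der_tensor_additive.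
- move=> w1 w2 /=; rewrite der_tensor_additive (biadditive_r rS_biadd).
  by rewrite (biadditive_r lS_biadd) addrACA.
move=> sigma y v sigma_dual /=.
rewrite mulAE // !der_tensorE // rSE // lSE // -(tS_additive_mid _ rho_dual).
by rewrite DM DM der_i (additive_fun0 (sl_additive_r _)) addr0 srM.
Qed.

Lemma der_tensor_is_derivation : DerB' (der_tensor D).
Proof.
split; [exact: der_tensor_additive | exact: der_tensorM |].
move=> c; elim=> [_ [rho [b [u [rho_dual ->]]]] | | y1 y2 _ IH1 _ IH2].
- by rewrite der_tensorE // der_i (additive_fun0 (tS_additive_mid _ rho_dual)).
- exact: additive_fun0 der_tensor_additive.
- by rewrite (additive_funB der_tensor_additive) IH1 IH2 subrr.
Qed.

End BDerivation.

Lemma der_tensorD D1 D2 : DerB D1 -> DerB D2 ->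
  forall z, der_tensor (fun x => D1 x + D2 x) z = der_tensor D1 z + der_tensor D2 z.
Proof.
move=> D1_der D2_der; have D12_der := is_derivationD S_bimod D1_der D2_der.
apply: (tensor3_ext tA_tensor (der_tensor_additive D12_der)).
- move=> z w.
  by rewrite (der_tensor_additive D1_der) (der_tensor_additive D2_der) addrACA.
move=> rho x u rho_dual.
rewrite (der_tensorE D12_der) // (der_tensorE D1_der) // (der_tensorE D2_der) //.
by rewrite -(tS_additive_mid _ rho_dual).
Qed.

Variables (n : nat) (rho : 'I_n -> N -> B) (u : 'I_n -> N).
Hypothesis rho_dual : forall j, dualf (rho j).
Hypothesis trace1 : \sum_j rho j (u j) = 1.

Lemma trace1_i : \sum_j i (rho j (u j)) = 1.
Proof. by rewrite -rmorph_sum trace1 rmorph1. Qed.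

Definition contraction j k : TS -> S :=
  tensor3_lift tS (fun sigma s v => sl (i (sigma (u j))) (sr s (i (rho k v)))).

Lemma contraction_balanced j k :
  balanced3 (fun b s => sl (i b) s) (fun s b => sr s (i b))
    (fun sigma s v => sl (i (sigma (u j))) (sr s (i (rho k v)))).
Proof.
split=> /=.
- by move=> sigma1 sigma2 s v _ _; rewrite rmorphD sl_additive_l.
- by move=> sigma s1 s2 v _; rewrite sr_additive_l sl_additive_r.
- move=> sigma s v1 v2 _.
  by rewrite (dualf_additive (rho_dual k)) rmorphD sr_additive_r sl_additive_r.
- by move=> sigma b s v _; rewrite rmorphM slM sl_sr.
- by move=> sigma s b v _; rewrite (dualfZ (rho_dual k)) rmorphM srM.
Qed.

Lemma contraction_additive j k : additive_fun (contraction j k).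
Proof. exact: (tensor3_lift_additive tS_tensor (contraction_balanced j k)). Qed.

Lemma contractionE j k sigma s v : dualf sigma ->
  contraction j k (tS sigma s v) = sl (i (sigma (u j))) (sr s (i (rho k v))).
Proof. exact: (tensor3_liftE tS_tensor (contraction_balanced j k)). Qed.

Lemma contraction_sum s :
  \sum_j \sum_k contraction j k (tS (rho j) s (u k)) = s.
Proof.
under eq_bigr => j _ do under eq_bigr => k _ do rewrite contractionE //.
under eq_bigr => j _ do rewrite -(additive_fun_sum (sl_additive_r _)).
rewrite -(additive_fun_sum (sr_additive_r s)) trace1_i sr1.
by rewrite -(additive_fun_sum (sl_additive_l s)) trace1_i sl1.
Qed.

Lemma der_tensor_inj D1 D2 : DerB D1 -> DerB D2 ->
  (forall z, der_tensor D1 z = der_tensor D2 z) -> forall x, D1 x = D2 x.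
Proof.
move=> D1_der D2_der D12 x.
rewrite -(contraction_sum (D1 x)) -(contraction_sum (D2 x)).
apply: eq_bigr => j _; apply: eq_bigr => k _.
by rewrite -(der_tensorE D1_der) // -(der_tensorE D2_der) // D12.
Qed.

Lemma tA_mul_expand sigma x y v : dualf sigma ->
  tA sigma (x * y) v = \sum_l mulA (tA sigma x (u l)) (tA (rho l) y v).
Proof.
move=> sigma_dual; under eq_bigr => l _ do rewrite mulAE //.
by rewrite -tA_sum // -mulr_suml -mulr_sumr trace1_i mulr1.
Qed.

Lemma lS_rS_contraction j k sigma v w : dualf sigma ->
  lS (tA sigma 1 (u j)) (rS w (tA (rho k) 1 v)) = tS sigma (contraction j k w) v.
Proof.
move=> sigma_dual; move: w.
apply: (tensor3_ext tS_tensor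
    (h1 := fun w => lS (tA sigma 1 (u j)) (rS w (tA (rho k) 1 v)))
    (h2 := fun w => tS sigma (contraction j k w) v)).
- by move=> w1 w2; rewrite (biadditive_l rS_biadd) (biadditive_r lS_biadd).
- by move=> w1 w2 /=; rewrite contraction_additive (tS_additive_mid _ sigma_dual).
move=> tau s t tau_dual /=.
by rewrite rSE // lSE // contractionE // mulr1 mul1r.
Qed.

Definition der_contract (D' : TA -> TS) (x : A) : S :=
  \sum_j \sum_k contraction j k (D' (tA (rho j) x (u k))).

Section B'Derivation.
Variable D' : TA -> TS.
Hypothesis D'_der : DerB' D'.

Lemma der'_i sigma b v : dualf sigma -> D' (tA sigma (i b) v) = 0.
Proof.
by case: D'_der => _ _ D'B' sigma_dual; apply/D'B'/sub_gen_in; exists sigma, b, v.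
Qed.

Lemma der'_tensor1 sigma v : dualf sigma -> D' (tA sigma 1 v) = 0.
Proof. by rewrite -(rmorph1 i); apply: der'_i. Qed.

Lemma der_contractE sigma x v : dualf sigma ->
  D' (tA sigma x v) = tS sigma (der_contract D' x) v.
Proof.
case: D'_der => D'_add D'M _ sigma_dual.
have D'_factor j : D' (mulA (tA sigma 1 (u j)) (tA (rho j) x v)) =
    \sum_k tS sigma (contraction j k (D' (tA (rho j) x (u k)))) v.
  rewrite D'M der'_tensor1 // (additive_fun0 (biadditive_l rS_biadd _)) add0r.
  rewrite -{1}[x]mulr1 tA_mul_expand // (additive_fun_sum D'_add).
  rewrite (additive_fun_sum (biadditive_r lS_biadd _)); apply: eq_bigr => k _.
  rewrite D'M der'_tensor1 // (additive_fun0 (biadditive_r lS_biadd _)) addr0.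
  exact: lS_rS_contraction.
rewrite -{1}[x]mul1r tA_mul_expand // (additive_fun_sum D'_add).
rewrite (eq_bigr _ (fun j _ => D'_factor j)) /der_contract tS_sum //.
by apply: eq_bigr => j _; rewrite tS_sum.
Qed.

Lemma der_contract_is_derivation : DerB (der_contract D').
Proof.
case: (D'_der) => D'_add D'M _; split.
- move=> x y; rewrite /der_contract -big_split; apply: eq_bigr => j _.
  rewrite -big_split; apply: eq_bigr => k _ /=.
  by rewrite (tA_additive_mid _ (rho_dual j)) D'_add contraction_additive.
- move=> x y.
  have D'_mul sigma v : dualf sigma -> D' (tA sigma (x * y) v) =
      tS sigma (sr (der_contract D' x) y + sl x (der_contract D' y)) v.
    move=> sigma_dual; rewrite tA_mul_expand // (additive_fun_sum D'_add).
    under eq_bigr => l _ do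
      rewrite D'M !der_contractE // rSE // lSE // -(tS_additive_mid _ sigma_dual).
    rewrite -tS_sum // big_split /= -(additive_fun_sum (sr_additive_r _)).
    rewrite -(additive_fun_sum (sl_additive_l _)).
    by rewrite -mulr_suml -mulr_sumr trace1_i mul1r mulr1.
  rewrite -[RHS]contraction_sum; apply: eq_bigr => j _; apply: eq_bigr => k _.
  by rewrite D'_mul.
- move=> _ [b ->]; rewrite /der_contract big1 // => j _; rewrite big1 // => k _.
  by rewrite der'_i // (additive_fun0 (contraction_additive j k)).
Qed.

Lemma der_tensor_contract z : der_tensor (der_contract D') z = D' z.
Proof.
have D_der := der_contract_is_derivation.
case: D'_der => D'_add _ _; move: z.
apply: (tensor3_ext tA_tensor (der_tensor_additive D_der) D'_add).
by move=> sigma x v sigma_dual; rewrite (der_tensorE D_der) // der_contractE.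
Qed.

End B'Derivation.
End DerivationTransfer.

Theorem lemma2p6 (A B : pzRingType) (i : {rmorphism B -> A}) (N : lmodType B)
    (S : zmodType) (sl : A -> S -> S) (sr : S -> A -> S)
    (TA TS : zmodType)
    (tA : (N -> B) -> A -> N -> TA) (tS : (N -> B) -> S -> N -> TS)
    (mulA : TA -> TA -> TA) (lS : TA -> TS -> TS) (rS : TS -> TA -> TS) :
  (forall b1 b2 : B, i b1 = i b2 -> b1 = b2) ->
  mod_sim N (B^o) ->
  bimod sl sr ->
  is_tensor3 (fun b x => i b * x) (fun x b => x * i b) tA ->
  is_tensor3 (fun b s => sl (i b) s) (fun s b => sr s (i b)) tS ->
  biadditive mulA ->
  (forall rho x u sigma y v, dualf rho -> dualf sigma ->
     mulA (tA rho x u) (tA sigma y v) = tA rho (x * i (sigma u) * y) v) ->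
  biadditive lS ->
  (forall rho x u sigma s v, dualf rho -> dualf sigma ->
     lS (tA rho x u) (tS sigma s v) = tS rho (sl (x * i (sigma u)) s) v) ->
  biadditive rS ->
  (forall sigma s v rho x u, dualf sigma -> dualf rho ->
     rS (tS sigma s v) (tA rho x u) = tS sigma (sr s (i (rho v) * x)) u) ->
  let DerB := is_derivation *%R sl sr (fun x => exists b, x = i b) in
  let B' := sub_gen (fun y => exists rho b u, dualf rho /\ y = tA rho (i b) u) in
  let DerB' := is_derivation mulA lS rS B' in
  exists Phi : (A -> S) -> TA -> TS,
    [/\ forall D, DerB D ->
          DerB' (Phi D) /\
          (forall rho x u, dualf rho -> Phi D (tA rho x u) = tS rho (D x) u),
        forall D1 D2, DerB D1 -> DerB D2 ->
          forall z, Phi (fun x => D1 x + D2 x) z = Phi D1 z + Phi D2 z,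
        forall D1 D2, DerB D1 -> DerB D2 ->
          (forall z, Phi D1 z = Phi D2 z) -> forall x, D1 x = D2 x &
        forall D', DerB' D' -> exists D, DerB D /\ forall z, Phi D z = D' z].
Proof.
move=> _ [_ B_summand] S_bimod tA_tensor tS_tensor mulA_biadd mulAE
  lS_biadd lSE rS_biadd rSE DerB B' DerB'; rewrite {}/DerB' {}/B' {}/DerB.
have [n [rho [u [rho_dual trace1]]]] := trace_one_of_summand B_summand.
exists (der_tensor tA tS); split.
- move=> D D_der; split.
  + exact: (der_tensor_is_derivation S_bimod tA_tensor tS_tensor mulA_biadd mulAE
      lS_biadd lSE rS_biadd rSE D_der).
  + exact: (der_tensorE S_bimod tA_tensor tS_tensor D_der).
- exact: (der_tensorD S_bimod tA_tensor tS_tensor).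
- exact: (der_tensor_inj S_bimod tA_tensor tS_tensor rho_dual trace1).
- move=> D' D'_der; exists (der_contract i sl sr tA tS rho u D'); split.
  + exact: (der_contract_is_derivation S_bimod tA_tensor tS_tensor mulAE
      lS_biadd lSE rS_biadd rSE rho_dual trace1 D'_der).
  + exact: (der_tensor_contract S_bimod tA_tensor tS_tensor mulAE
      lS_biadd lSE rS_biadd rSE rho_dual trace1 D'_der).
Qed.
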